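(* Let $G$ be a finite abstract simplicial complex and let $V=\{x\in G : |x|=1\}$. Then, as polynomials in $t$, $$ f_G(t)-1 = \sum_{v \in V} F_{S(v)}(t). $$
   Context: A finite abstract simplicial complex is a finite set of non-empty finite sets closed under taking non-empty subsets. For a complex $H$ of maximal dimension $d$ (maximal $|x|-1$), $f_k(H)$ is the number of elements of $H$ of cardinality $k+1$, and $f_H(t)=1+\sum_{k=0}^{d} f_k(H)\,t^{k+1}$ (so $f_H(t)=1$ for the empty complex); $F_H(t)=\int_0^t f_H(s)\,ds$. For $x\in G$: $U(x)=\{y\in G: x\subset y\}$, $B(x)=\{y\in G : y\subset z \text{ for some } z\in U(x)\}$, and the unit sphere $S(x)=B(x)\setminus U(x)$, which is again a simplicial complex. *)

From HB Require Import structures.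
From mathcomp Require Import all_boot all_order all_algebra.
Set Implicit Arguments. Unset Strict Implicit. Unset Printing Implicit Defensive.
Import Order.TTheory GRing.Theory Num.Theory.
Local Open Scope ring_scope.

Definition is_complex (T : finType) (G : {set {set T}}) : Prop :=
  set0 \notin G /\
  forall x y : {set T}, x \in G -> y \subset x -> y != set0 -> y \in G.

Definition fnum (T : finType) (H : {set {set T}}) (k : nat) : nat :=
  #|[set x in H | #|x| == k.+1]|.

(* f_H(t) = 1 + sum_k f_k(H) t^(k+1); every face has at most #|T| elements,
   so summing over k < #|T| covers all k <= dim H (extra terms are 0). *)
Definition fpoly (T : finType) (H : {set {set T}}) : {poly rat} :=
  1 + \sum_(k < #|T|) (fnum H k)%:R *: 'X^(k.+1).

Definition antider (p : {poly rat}) : {poly rat} :=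
  \poly_(i < (size p).+1) (if i is j.+1 then p`_j / (j.+1)%:R else 0).

Definition Fpoly (T : finType) (H : {set {set T}}) : {poly rat} :=
  antider (fpoly H).

Definition Ustar (T : finType) (G : {set {set T}}) (x : {set T}) :=
  [set y in G | x \subset y].
Definition Bstar (T : finType) (G : {set {set T}}) (x : {set T}) :=
  [set y in G | [exists z in Ustar G x, y \subset z]].
Definition Ssphere (T : finType) (G : {set {set T}}) (x : {set T}) :=
  Bstar G x :\: Ustar G x.

Definition vertices (T : finType) (G : {set {set T}}) :=
  [set x in G | #|x| == 1%N].

From mathcomp Require Import all_boot all_order all_algebra.
Import GRing.Theory Num.Theory.

(* A face x of G with k + 2 vertices gives, after removing v, a face with k + 1
   vertices of the unit sphere S(v) of each of its k + 2 vertices v, and every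
   such face of S(v) arises this way; hence sum_v f_k(S(v)) = (k + 2) f_(k+1)(G).
   Integration divides the coefficient of t^(k+1) in f_(S(v)) by exactly k + 2,
   so the coefficients of t^(k+2) agree; those of t agree because the constant
   term of each f_(S(v)) is 1 and there are f_0(G) vertices. *)

Section UnitSpheres.

Variables (T : finType) (G : {set {set T}}).
Hypothesis complexG : is_complex G.

Lemma mem_Ssphere (x y : {set T}) :
  (y \in Ssphere G x) = [&& y != set0, ~~ (x \subset y) & (x :|: y) \in G].
Proof.
have [G0 Gsub] := complexG.
rewrite /Ssphere /Bstar /Ustar !inE; apply/idP/idP.
- case/andP=> xNy /andP[yG /existsP[z /andP[]]].
  rewrite inE => /andP[zG xz] yz.
  have y0 : y != set0 by apply: contraNneq G0 => <-.
  rewrite yG /= in xNy; apply/and3P; split => //; apply: (Gsub z) => //.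
    by rewrite subUset xz.
  by apply: contra y0; rewrite setU_eq0 => /andP[].
- case/and3P=> y0 xNy xyG.
  have yG : y \in G by apply: (Gsub (x :|: y)) => //; apply: subsetUr.
  rewrite yG /= xNy; apply/existsP; exists (x :|: y).
  by rewrite !inE xyG subsetUl subsetUr.
Qed.

Lemma fnum_Ssphere1 (a : T) (m : nat) :
  fnum (Ssphere G [set a]) m = fnum (Ustar G [set a]) m.+1.
Proof.
have memS y : (y \in Ssphere G [set a]) = [&& y != set0, a \notin y & a |: y \in G].
  by rewrite mem_Ssphere sub1set.
rewrite /fnum -(@card_in_imset _ _ (setU [set a])); last first.
  move=> y1 y2; rewrite inE memS => /andP[/and3P[_ ay1 _] _].
  rewrite inE memS => /andP[/and3P[_ ay2 _] _] eq_ay.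
  by rewrite -(setU1K ay1) -(setU1K ay2) eq_ay.
apply: eq_card => x; apply/imsetP/idP.
- case=> y; rewrite inE memS => /andP[/and3P[_ ay ayG] /eqP cy] ->.
  by rewrite !inE ayG sub1set setU11 cardsU1 ay cy /= add1n.
- rewrite !inE sub1set => /andP[/andP[xG ax]]; rewrite (cardsD1 a) ax add1n eqSS => cx.
  exists (x :\ a); last by rewrite setD1K.
  rewrite inE memS setD11 setD1K // xG cx andbT /= -card_gt0 (eqP cx).
  exact: ltn0Sn.
Qed.

Lemma card_vertices_sub (x : {set T}) :
  x \in G -> #|[set v in vertices G | v \subset x]| = #|x|.
Proof.
have [_ Gsub] := complexG; move=> xG.
rewrite -[RHS](card_imset _ set1_inj); apply: eq_card => v; rewrite !inE.
apply/idP/imsetP.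
- by case/andP=> /andP[_ /cards1P[a ->]]; rewrite sub1set => ax; exists a.
- case=> a ax ->; rewrite cards1 sub1set ax !andbT.
  by apply: (Gsub x) => //; rewrite ?sub1set // -card_gt0 cards1.
Qed.

Lemma sum_fnum_Ustar_vertices (k : nat) :
  \sum_(v in vertices G) fnum (Ustar G v) k = (fnum G k * k.+1)%N.
Proof.
rewrite /fnum; under eq_bigr do rewrite -sum1_card.
rewrite (exchange_big_dep (mem [set x in G | #|x| == k.+1])) /=; last first.
  by move=> v x _; rewrite !inE => /andP[/andP[-> _] ->].
rewrite -sum_nat_const; apply: eq_bigr => x; rewrite inE => /andP[xG /eqP cx].
rewrite sum1dep_card -[RHS]cx -(card_vertices_sub x xG); apply: eq_card => v.
by rewrite !inE xG cx eqxx !andbT.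
Qed.

End UnitSpheres.

Local Open Scope ring_scope.

Lemma fnum_eq0 (T : finType) (H : {set {set T}}) (j : nat) :
  (#|T| <= j)%N -> fnum H j = 0%N.
Proof.
move=> Tj; apply/eqP; rewrite cards_eq0; apply/eqP/setP => x; rewrite !inE.
by rewrite ltn_eqF ?andbF // ltnS (leq_trans (max_card _)).
Qed.

Lemma coef_fpoly (T : finType) (H : {set {set T}}) (i : nat) :
  (fpoly H)`_i = if i is j.+1 then (fnum H j)%:R else 1.
Proof.
rewrite /fpoly coefD coef1 coef_sum.
under eq_bigr do rewrite coefZ coefXn.
case: i => [|j] /=; first by rewrite big1 ?addr0 // => k _; rewrite mulr0.
rewrite add0r; under eq_bigr do rewrite eqSS.
have [jT | Tj] := ltnP j #|T|; last first.
  by rewrite fnum_eq0 // big1 // => k _; rewrite gtn_eqF ?mulr0 // (leq_trans _ Tj).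
rewrite (bigD1 (Ordinal jT)) //= eqxx mulr1 big1 ?addr0 // => k kj.
by rewrite eq_sym -(inj_eq val_inj) /= in kj; rewrite (negbTE kj) mulr0.
Qed.

Lemma coef_antider (p : {poly rat}) (i : nat) :
  (antider p)`_i = if i is j.+1 then p`_j / (j.+1)%:R else 0.
Proof.
rewrite /antider coef_poly; case: ltnP => //; case: i => // j.
by rewrite ltnS => pj; rewrite nth_default // mul0r.
Qed.

Theorem mainTheorem8 (T : finType) (G : {set {set T}}) :
  is_complex G ->
  fpoly G - 1 = \sum_(v in vertices G) Fpoly (Ssphere G v).
Proof.
move=> complexG; apply/polyP => i.
rewrite coefB coef1 coef_sum coef_fpoly.
under eq_bigr do rewrite /Fpoly coef_antider.
case: i => [|j] /=; first by rewrite subrr big1.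
rewrite subr0; under eq_bigr do rewrite coef_fpoly.
case: j => [|k] /=; first by rewrite sumr_const divr1.
have sphere_fnum v : v \in vertices G ->
    fnum (Ssphere G v) k = fnum (Ustar G v) k.+1.
  by rewrite inE => /andP[_ /cards1P[a ->]]; apply: fnum_Ssphere1.
rewrite -mulr_suml -natr_sum (eq_bigr _ sphere_fnum).
by rewrite sum_fnum_Ustar_vertices // natrM mulfK // pnatr_eq0.
Qed.
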